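(* Let $S$ be a locally compact Hausdorff space with Borel $\sigma$-algebra $\mathscr{S}$, let $N>n$, and let $X=(X_1,\ldots,X_n)$ be an exchangeable random element of $S^n$ such that the law of $X_1$ is tight. If $\mathcal L$ is an extending functional (for $n$, $N$ and the law of $X$) with $\|\mathcal L\|=1$, then the restriction of $\mathcal L$ to the space $C_c(S^N)$ of continuous compactly supported functions on $S^N$ has norm $1$ (with respect to the sup norm).
   Context: $b(S^k)$ is the space of bounded measurable real functions on $S^k$ with the sup norm. With $\mathfrak S[n,N]$ the set of injections $\{1,\ldots,n\}\to\{1,\ldots,N\}$ and $(N)_n=N(N-1)\cdots(N-n+1)$, $U^N_ng(x_1,\ldots,x_N)=\frac1{(N)_n}\sum_{\sigma\in\mathfrak S[n,N]}g(x_{\sigma(1)},\ldots,x_{\sigma(n)})$. The primitive extending functional $\mathcal E$ on $U^N_n(b(S^n))$ is $\mathcal E(U^N_ng)=\mathbb{E}\,g(X)$ (well defined). An extending functional is a linear functional $\mathcal L:b(S^N)\to\mathbb{R}$ which is invariant under permutations of the arguments of its input, agrees with $\mathcal E$ on $U^N_n(b(S^n))$, and has $\|\mathcal L\|=\|\mathcal E\|$. A probability measure $P$ on $S$ is tight if for every $\epsilon>0$ there is a compact $K$ with $P(K)\ge1-\epsilon$. *)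

From HB Require Import structures.
From mathcomp Require Import all_boot all_order all_algebra.
From mathcomp Require Import all_classical all_reals all_analysis.
From mathcomp Require Import fingroup perm.
Set Implicit Arguments. Unset Strict Implicit. Unset Printing Implicit Defensive.
Import Order.TTheory GRing.Theory Num.Theory.
Import numFieldNormedType.Exports.
Local Open Scope classical_set_scope.
Local Open Scope ring_scope.

Definition prodS (S : topologicalType) (k : nat) : topologicalType :=
  prod_topology (fun _ : 'I_k => S).

Definition borel_set (T : topologicalType) (A : set T) : Prop :=
  <<s [set: T], open >> A.

Definition borel_fun (R : realType) (T : topologicalType) (f : T -> R) : Prop :=
  forall B : set R, open B -> borel_set (f @^-1` B).

Definition supnorm (R : realType) (T : Type) (f : T -> R) : \bar R :=
  ereal_sup (range (fun x => (`|f x|)%:E)).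

Definition bfun (R : realType) (S : topologicalType) (k : nat)
    (f : prodS S k -> R) : Prop :=
  borel_fun f /\ exists M : R, forall x, `|f x| <= M.

Definition ccfun (R : realType) (S : topologicalType) (k : nat)
    (f : prodS S k -> R) : Prop :=
  continuous f /\ compact (closure [set x | f x != 0]).

Definition opnorm (R : realType) (T : Type) (D : set (T -> R))
    (L : (T -> R) -> R) : \bar R :=
  ereal_sup [set (`|L f|)%:E | f in [set f | D f /\ (supnorm f <= 1)%E]].

Definition reindex (S : topologicalType) (n N : nat) (s : 'I_n -> 'I_N)
    (x : prodS S N) : prodS S n := fun i => x (s i).

Definition UNn (R : realType) (S : topologicalType) (n N : nat)
    (g : prodS S n -> R) : prodS S N -> R :=
  fun x => ((N ^_ n)%:R)^-1 *
    \sum_(s : {ffun 'I_n -> 'I_N} | injectiveb s) g (reindex s x).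
Arguments UNn {R S n} N g.

Definition random_element (d : measure_display) (Omega : measurableType d)
    (S : topologicalType) (n : nat) (X : Omega -> prodS S n) : Prop :=
  forall A : set (prodS S n), borel_set A -> measurable (X @^-1` A).

Definition exchangeable (R : realType) (d : measure_display)
    (Omega : measurableType d) (P : probability Omega R)
    (S : topologicalType) (n : nat) (X : Omega -> prodS S n) : Prop :=
  forall (s : 'S_n) (A : set (prodS S n)), borel_set A ->
    P ((fun w => reindex (fun i => s i) (X w)) @^-1` A) = P (X @^-1` A).

Definition tight_coord (R : realType) (d : measure_display)
    (Omega : measurableType d) (P : probability Omega R)
    (S : topologicalType) (n : nat) (X : Omega -> prodS S n) (i : 'I_n) : Prop :=
  forall eps : R, 0 < eps -> exists K : set S, compact K /\
    (P ((fun w => X w i) @^-1` K) >= (1 - eps)%:E)%E.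

(* The primitive extending functional E on U^N_n(b(S^n)): E(U g) = E g(X);
   its norm (sup norm on S^N). *)
Definition primitive_norm (R : realType) (d : measure_display)
    (Omega : measurableType d) (P : probability Omega R)
    (S : topologicalType) (n N : nat) (X : Omega -> prodS S n) : \bar R :=
  ereal_sup [set (`| \int[P]_w (g (X w))%:E |)%E
            | g in [set g | bfun g /\ (supnorm (UNn N g) <= 1)%E]].

Definition extending_functional (R : realType) (d : measure_display)
    (Omega : measurableType d) (P : probability Omega R)
    (S : topologicalType) (n N : nat) (X : Omega -> prodS S n)
    (L : (prodS S N -> R) -> R) : Prop :=
  [/\ (forall (a : R) (f g : prodS S N -> R), bfun f -> bfun g ->
         L (fun x => a * f x + g x) = a * L f + L g),
      (forall (s : 'S_N) (f : prodS S N -> R), bfun f ->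
         L (fun x => f (reindex (fun i => s i) x)) = L f),
      (forall g : prodS S n -> R, bfun g ->
         ((L (UNn N g))%:E = \int[P]_w (g (X w))%:E)%E) &
      opnorm (@bfun R S N) L = primitive_norm P N X].
Arguments primitive_norm {R d Omega} P {S n} N X.
Arguments extending_functional {R d Omega} P {S n} N X L.

From Pilot Require Import Defs.
From HB Require Import structures.
From mathcomp Require Import all_boot all_order all_algebra.
From mathcomp Require Import all_classical all_reals all_analysis.
From mathcomp Require Import fingroup perm.
From mathcomp Require Import measurable_realfun lra.
Import Order.TTheory GRing.Theory Num.Theory.
Import numFieldNormedType.Exports.
Local Open Scope classical_set_scope.
Local Open Scope ring_scope.

(* Since [L 1 = E 1 = 1] and [||L|| = 1], the functional [L] is positive on
   b(S^N).  Given [e > 0], tightness yields a compact [K] with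
   [P(X_1 \notin K) <= e / N], and Urysohn's lemma on the one-point
   compactification gives a continuous [f0 : S -> [0,1]] with compact support
   and [f0 = 1] on [K].  The product [F x = prod_i f0 (x_i)] lies in C_c(S^N),
   and [1 - F] is dominated by [N] times the proportion [u] of coordinates
   lying outside [K].  As [u = U^N_n (1_{y_1 \notin K})], positivity gives
   [1 - L F <= N L u = N P(X_1 \notin K) <= e]. *)

(* [T] with its Borel sigma-algebra; a point [x0] is needed only because
   measurable types are pointed. *)
Definition borel_space (T : topologicalType) (x0 : T) :=
  g_sigma_algebraType
    (@open T : set (set (HB.pack_for pointedType T (isPointed.Build T x0)))).
Arguments borel_space : clear implicits.

Section BorelFunctions.
Context {R : realType} {T : topologicalType}.
Implicit Types (f g : T -> R) (A : set T).

Lemma borel_funE (x0 : T) f :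
  borel_fun f <-> measurable_fun setT (f : borel_space T x0 -> R).
Proof.
split=> [bf|mf B oB].
- apply: (measurability _ (RGenOpens.measurableE R)).
  move=> _ [_ [a [b ->]] <-]; rewrite setTI; apply: bf; exact: interval_open.
- by have := mf measurableT B (open_measurable oB); rewrite setTI.
Qed.

Lemma borel_fun_inhabited f : (T -> borel_fun f) -> borel_fun f.
Proof.
move=> bf B oB; have [[x0 _]|T0] := pselect (exists x : T, True); first exact: bf.
rewrite (_ : _ @^-1` _ = set0); first exact: sigma_algebra0.
by apply/seteqP; split=> // x; have := T0; move/forallNP/(_ x).
Qed.

Lemma closed_borel_set A : closed A -> borel_set A.
Proof.
move=> cA; rewrite -(setCK A) -setTD; apply: sigma_algebraCD.
by apply: sub_sigma_algebra; exact: closed_openC.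
Qed.

Lemma continuous_borel_fun f : continuous f -> borel_fun f.
Proof. by move=> /continuousP cf B oB; apply: sub_sigma_algebra; exact: cf. Qed.

Lemma borel_fun_cst (c : R) : borel_fun (fun _ : T => c).
Proof. by apply: borel_fun_inhabited => x0; apply/(borel_funE x0). Qed.

Lemma borel_fun_indic A : borel_set A -> borel_fun (\1_A : T -> R).
Proof. by move=> bA; apply: borel_fun_inhabited => x0; apply/(borel_funE x0). Qed.

Lemma borel_funMD (a : R) f g : borel_fun f -> borel_fun g ->
  borel_fun (fun x => a * f x + g x).
Proof.
move=> bf bg; apply: borel_fun_inhabited => x0; apply/(borel_funE x0).
move: bf bg => /(borel_funE x0) mf /(borel_funE x0) mg.
by apply: measurable_funD => //; exact: measurable_funM.
Qed.

Lemma borel_funM (a : R) f : borel_fun f -> borel_fun (fun x => a * f x).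
Proof.
move=> bf; apply: borel_fun_inhabited => x0; apply/(borel_funE x0).
by move: bf => /(borel_funE x0) mf; exact: measurable_funM.
Qed.

Lemma borel_fun_sum (I : Type) (s : seq I) (P : pred I) (h : I -> T -> R) :
  (forall i, borel_fun (h i)) -> borel_fun (fun x => \sum_(i <- s | P i) h i x).
Proof.
move=> bh; apply: borel_fun_inhabited => x0; apply/(borel_funE x0).
under eq_fun do rewrite big_mkcond.
apply: measurable_sum => i; case: (P i); last exact: measurable_cst.
exact/(borel_funE x0).
Qed.

End BorelFunctions.

Section NormBounds.
Context {R : realType} {T : Type}.

Lemma supnorm_le1 {f : T -> R} : (forall x, `|f x| <= 1) -> (supnorm f <= 1)%E.
Proof. by move=> f1; apply/ereal_supP => _ [x _ <-]; rewrite lee_fin. Qed.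

Lemma opnorm_ub {D : set (T -> R)} {L : (T -> R) -> R} {f} :
  D f -> (supnorm f <= 1)%E -> ((`|L f|)%:E <= opnorm D L)%E.
Proof. by move=> Df f1; apply: ereal_sup_ubound; exists f. Qed.

End NormBounds.

Section BoundedFunctions.
Context {R : realType} {S : topologicalType} {k : nat}.
Implicit Types f g : prodS S k -> R.

Lemma bfun_cst (c : R) : bfun (fun _ : prodS S k => c).
Proof. by split; [exact: borel_fun_cst | exists `|c|]. Qed.

Lemma bfunMD (a : R) {f g} : bfun f -> bfun g -> bfun (fun x => a * f x + g x).
Proof.
move=> [bf [M1 fM1]] [bg [M2 gM2]]; split; first exact: borel_funMD.
exists (`|a| * M1 + M2) => x; apply: (le_trans (ler_normD _ _)).
by rewrite normrM; apply: lerD => //; exact: ler_wpM2l.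
Qed.

Lemma bfunZ (a : R) {f} : bfun f -> bfun (fun x => a * f x).
Proof.
by move=> bf; under eq_fun do rewrite -[_ * _]addr0; exact: bfunMD bf (bfun_cst 0).
Qed.

Lemma ccfun_bfun {f} : ccfun f -> bfun f.
Proof.
case=> cf cpt; split; first exact: continuous_borel_fun.
have /compact_bounded [M [_ fM]] : compact (f @` closure [set x | f x != 0]).
  by apply: continuous_compact => //; exact: continuous_subspaceT.
exists (Num.max (M + 1) 0) => x; rewrite le_max.
have [->|fx0] := eqVneq (f x) 0; first by rewrite normr0 lexx orbT.
apply/orP; left; apply: fM; first by rewrite ltrDl.
by exists x => //; exact: subset_closure.
Qed.

Lemma bfun_indic_coord (K : set S) (j : 'I_k) : closed K ->
  bfun (fun x : prodS S k => \1_(~` K) (x j) : R).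
Proof.
move=> cK; split; last first.
  by exists 1 => x; rewrite indicE; case: (_ \in _); rewrite ?normr0 ?normr1.
rewrite (_ : (fun x => _) = \1_(proj j @^-1` ~` K)) //.
apply: borel_fun_indic; apply: sub_sigma_algebra.
apply: open_comp; last exact: closed_openC.
by move=> x _; exact: proj_continuous.
Qed.

End BoundedFunctions.

Section Urysohn.
Context {R : realType} {S : topologicalType}.
Hypotheses (hS : hausdorff_space S) (lcS : locally_compact [set: S]).

Let O := one_point_compactification S.

Lemma one_point_separator {K : set S} : compact K ->
  exists g : O -> R, [/\ continuous g, forall y, 0 <= g y <= 1,
    g None = 0 & forall x, K x -> g (Some x) = 1].
Proof.
move=> cK.
have hO : hausdorff_space O := one_point_compactification_hausdorff lcS hS.
have nO : normal_space O.
  by apply: compact_normal => //; exact: one_point_compactification_compact.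
have cSK : compact (Some @` K : set O).
  apply: continuous_compact => //; apply: continuous_subspaceT.
  exact: one_point_compactification_some_continuous.
have clN : closed ([set None] : set O).
  by apply: compact_closed => //; exact: compact_set1.
have NSK0 : [set None] `&` (Some @` K : set O) = set0.
  by apply/seteqP; split => // y [/= -> [z _]].
have /(uniform_separatorP (R:=R)) [g [cg g01 g0 g1]] :=
  (normal_separatorP (R:=R)).1 nO _ _ clN (compact_closed hO cSK) NSK0.
exists g; split => //.
- by move=> y; have := g01 (g y) (ex_intro2 _ _ y I erefl); rewrite /= in_itv.
- by apply: g0; exists None.
- by move=> x Kx; apply: g1; exists (Some x) => //; exists x.
Qed.

(* [f0 = max 0 (2 g - 1)] vanishes on the neighbourhood [g < 1/2] of the
   point at infinity, which is what makes its support compact. *)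
Lemma compact_urysohn {K : set S} : compact K ->
  exists f0 : S -> R, [/\ continuous f0, forall x, 0 <= f0 x <= 1,
    forall x, K x -> f0 x = 1 & compact (closure [set x | f0 x != 0])].
Proof.
move=> cK; have [g [cg g01 gN gK]] := one_point_separator cK.
have [W [cW clW] WV] : nbhs (None : O) (g @^-1` `]-oo, 1/2[).
  apply: (cg None); rewrite /= gN; apply: open_nbhs_nbhs; split; first exact: interval_open.
  by rewrite /= in_itv /=.
pose f0 x := Num.max 0 (2 * g (Some x) - 1).
have cgS : continuous (g \o Some).
  move=> x; apply: continuous_comp; last exact: cg.
  exact: one_point_compactification_some_continuous.
exists f0; split.
- have c2 : continuous (fun x => 2 * g (Some x) - 1).
    move=> x.
    change (continuous_at x ((fun y => (fun=> 2) y * g (Some y)) \+ (fun=> -1))).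
    apply: continuousD; last exact: cst_continuous.
    change (continuous_at x ((fun=> 2) \* (g \o Some))).
    by apply: continuousM; [exact: cst_continuous | exact: cgS].
  by move=> x; have := @continuous_max R S (fun=> 0) _ x (@cst_continuous _ _ 0 x) (c2 x).
- move=> x; rewrite /f0 le_max lexx /= ge_max ler01 /=.
  by have /andP[_ ?] := g01 (Some x); lra.
- by move=> x Kx; rewrite /f0 gK // maxEle ifT; lra.
- apply: (subclosed_compact _ cW); first exact: closed_closure.
  rewrite ((closure_id W).1 clW); apply: closureS => x /= fx.
  apply: contrapT => Wx.
  have : (g @^-1` `]-oo, 1/2[) (Some x) by apply: WV; left; exists x.
  rewrite /= in_itv /= => gx.
  by move: fx; rewrite /f0 maxEle ifF ?eqxx //; apply/negbTE; rewrite -ltNge; lra.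
Qed.

End Urysohn.

Lemma continuous_prod_fun {R : realType} (T : topologicalType) (I : Type) (s : seq I)
    (h : I -> T -> R) : (forall i, continuous (h i)) ->
  continuous (fun x => \prod_(i <- s) h i x).
Proof.
move=> ch; elim: s => [|a s IH] x.
  by under eq_fun do rewrite big_nil; exact: cst_continuous.
under eq_fun do rewrite big_cons.
change (continuous_at x (h a \* (fun y => \prod_(i <- s) h i y))).
by apply: continuousM; [exact: ch | exact: IH].
Qed.

Section ProductBump.
Context {R : realType} {S : topologicalType} {k : nat}.

Lemma closed_coordwise (W : set S) :
  closed W -> closed [set x : prodS S k | forall i, W (x i)].
Proof.
move=> cW; rewrite (_ : [set x | _] = \bigcap_(i in [set: 'I_k]) (proj i @^-1` W)).
  apply: closed_bigI => i _; apply: closed_comp => // x _; exact: proj_continuous.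
by apply/seteqP; split=> x Wx i; [move=> _; exact: Wx | exact: Wx i I].
Qed.

Lemma prod_coord_ccfun {f0 : S -> R} :
  continuous f0 -> compact (closure [set y | f0 y != 0]) ->
  ccfun (fun x : prodS S k => \prod_(i < k) f0 (x i)).
Proof.
move=> cf0 cW; set W := closure [set y | f0 y != 0]; split.
  apply: continuous_prod_fun => i x; apply: continuous_comp; last exact: cf0.
  exact: proj_continuous.
have cWk : compact [set x : prodS S k | forall i, W (x i)].
  exact: (@tychonoff _ (fun _ : 'I_k => S) (fun=> W)).
apply: (subclosed_compact _ cWk); first exact: closed_closure.
have clWk : closed [set x : prodS S k | forall i, W (x i)].
  by apply: closed_coordwise; exact: closed_closure.
rewrite ((closure_id _).1 clWk).
apply: closureS => x /= px i; apply: subset_closure => /=.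
by move: px; apply: contra => /eqP fx0; apply/prodf_eq0; exists i; rewrite ?fx0.
Qed.

End ProductBump.

Section InjectionCounting.
Context {R : realType} {n N : nat}.
Local Notation inj := {ffun 'I_n -> 'I_N}.

Lemma sum_injective_ffun1 : \sum_(s : inj | injectiveb s) (1 : R) = (N ^_ n)%:R.
Proof.
rewrite sumr_const; congr (_%:R).
by have := card_inj_ffuns 'I_n 'I_N; rewrite !card_ord cardsE.
Qed.

Lemma count_injective_at_eq (i0 : 'I_n) (j j' : 'I_N) :
  \sum_(s : inj | injectiveb s) ((s i0 == j)%:R : R) =
  \sum_(s : inj | injectiveb s) ((s i0 == j')%:R : R).
Proof.
pose h (s : inj) : inj := [ffun i => tperm j j' (s i)].
have h_inj : injective h.
  move=> s1 s2 /ffunP e; apply/ffunP => i.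
  by have := e i; rewrite !ffunE => /perm_inj.
rewrite (reindex_inj h_inj); apply: eq_big => s.
  apply/injectiveP/injectiveP => si a b.
    by move=> e; apply: si; rewrite /h !ffunE e.
  by rewrite /h !ffunE => /perm_inj /si.
by move=> _; rewrite /h ffunE (canF_eq (tpermK j j')) tpermL.
Qed.

Lemma count_injective_at (i0 : 'I_n) (j : 'I_N) :
  N%:R * \sum_(s : inj | injectiveb s) ((s i0 == j)%:R : R) = (N ^_ n)%:R.
Proof.
rewrite -sum_injective_ffun1.
transitivity (\sum_(s : inj | injectiveb s) \sum_(k < N) ((s i0 == k)%:R : R)).
  rewrite exchange_big /=.
  under [RHS]eq_bigr => k _ do rewrite (count_injective_at_eq i0 k j).
  by rewrite sumr_const card_ord mulr_natl.
apply: eq_bigr => s _; rewrite (bigD1 (s i0)) //= eqxx big1 ?addr0 // => k.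
by rewrite eq_sym => /negbTE ->.
Qed.

End InjectionCounting.

Lemma UNn_cst1 {R : realType} {S : topologicalType} (n N : nat) : (n <= N)%N ->
  UNn N (fun _ : prodS S n => (1 : R)) = fun _ => 1.
Proof.
move=> nN; apply: funext => x; rewrite /UNn sum_injective_ffun1 mulVf //.
by rewrite pnatr_eq0 -lt0n ffact_gt0.
Qed.

Section OutsideMass.
Context {R : realType} {S : topologicalType} {n N : nat}.
Variables (K : set S) (i0 : 'I_n).
Hypothesis nN : (n <= N)%N.

(* For [n <= N] this is the proportion of the coordinates of [x] lying outside
   [K], since [x_(s i0)] runs over each coordinate for [(N)_n / N] injections [s]. *)
Definition outside_mass : prodS S N -> R :=
  UNn N (fun y : prodS S n => \1_(~` K) (y i0)).

Let indic01 (y : S) : 0 <= (\1_(~` K) y : R) <= 1.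
Proof. by rewrite indicE; case: (_ \in _); rewrite ?lexx ?ler01. Qed.

Let ffact_gt0 : 0 < (N ^_ n)%:R :> R.
Proof. by rewrite ltr0n ffact_gt0. Qed.

Lemma outside_mass_ge0 x : 0 <= outside_mass x.
Proof.
apply: mulr_ge0; first by rewrite invr_ge0 ltW.
by apply: sumr_ge0 => s _; have /andP[] := indic01 (x (s i0)).
Qed.

Lemma outside_mass_le1 x : outside_mass x <= 1.
Proof.
rewrite /outside_mass /UNn ler_pdivrMl // mulr1 -sum_injective_ffun1.
by apply: ler_sum => s _; have /andP[] := indic01 (x (s i0)).
Qed.

Lemma outside_mass_ge x j : ~ K (x j) -> 1 <= N%:R * outside_mass x.
Proof.
move=> nKj.
apply: (@le_trans _ _ (N%:R * ((N ^_ n)%:R^-1 *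
    \sum_(s : {ffun 'I_n -> 'I_N} | injectiveb s) ((s i0 == j)%:R : R)))).
  by rewrite mulrCA count_injective_at mulVf // lt0r_neq0.
rewrite /outside_mass /UNn; apply: ler_wpM2l; first exact: ler0n.
apply: ler_wpM2l; first by rewrite invr_ge0 ltW.
apply: ler_sum => s _; have [e|_] := eqVneq (s i0) j.
  by rewrite indicE mem_set //= /Defs.reindex e.
by have /andP[] := indic01 (x (s i0)).
Qed.

Lemma one_sub_prod_le_outside_mass {f0 : S -> R} x :
  (forall y, 0 <= f0 y) -> (forall y, K y -> f0 y = 1) ->
  1 - \prod_(i < N) f0 (x i) <= N%:R * outside_mass x.
Proof.
move=> f0_ge0 f0K.
have [allK|/existsNP [j nKj]] := pselect (forall i, K (x i)).
  rewrite big1 ?subrr => [|i _]; last exact: f0K.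
  by rewrite mulr_ge0 ?ler0n ?outside_mass_ge0.
have : 0 <= \prod_(i < N) f0 (x i) by apply: prodr_ge0.
by have := outside_mass_ge _ _ nKj; lra.
Qed.

Lemma bfun_outside_mass : closed K -> bfun outside_mass.
Proof.
move=> cK; split; last first.
  by exists 1 => x; rewrite ger0_norm ?outside_mass_le1 ?outside_mass_ge0.
apply: borel_funM; apply: borel_fun_sum => s.
by case: (@bfun_indic_coord R S N K (s i0) cK).
Qed.

End OutsideMass.

Section ContractiveFunctional.
Context {R : realType} {S : topologicalType} {N : nat}.
Context {L : (prodS S N -> R) -> R}.
Hypothesis L_lin : forall (a : R) (f g : prodS S N -> R), bfun f -> bfun g ->
  L (fun x => a * f x + g x) = a * L f + L g.
Hypothesis L1 : L (fun=> 1) = 1.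
Hypothesis L_contr : forall f, bfun f -> (forall x, `|f x| <= 1) -> `|L f| <= 1.

Lemma functional_cst0 : L (fun=> 0) = 0.
Proof.
have := @L_lin 1 _ _ (bfun_cst 0) (bfun_cst 0).
under eq_fun do rewrite mul1r addr0.
by rewrite mul1r; lra.
Qed.

Lemma functionalZ (a : R) f : bfun f -> L (fun x => a * f x) = a * L f.
Proof.
move=> bf; have := @L_lin a _ _ bf (bfun_cst 0).
by under eq_fun do rewrite addr0; rewrite functional_cst0 addr0.
Qed.

(* With [L 1 = 1], contractivity forces positivity: [1 - f / M] lies in the
   unit ball whenever [0 <= f <= M]. *)
Lemma functional_ge0 f : bfun f -> (forall x, 0 <= f x) -> 0 <= L f.
Proof.
move=> bf f0; have [_ [M fM]] := bf; pose M' := Num.max M 0 + 1.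
have M'0 : 0 < M' by rewrite ltr_pwDr // le_max lexx orbT.
have unit_ball x : `|- M'^-1 * f x + 1| <= 1.
  have fxM : f x <= M'.
    apply: (le_trans (ler_norm _)); apply: (le_trans (fM x)).
    by rewrite ltW // ltr_pwDr // le_max lexx.
  have q0 : 0 <= M'^-1 * f x by rewrite mulr_ge0 // invr_ge0 ltW.
  have q1 : M'^-1 * f x <= 1 by rewrite ler_pdivrMl // mulr1.
  by rewrite ler_norml; apply/andP; split; lra.
have := L_contr _ (bfunMD (- M'^-1) bf (bfun_cst 1)) unit_ball.
rewrite L_lin ?L1 //; last exact: bfun_cst.
rewrite ler_norml => /andP[_ Lf1].
have M'V0 : 0 < M'^-1 by rewrite invr_gt0.
by rewrite -(pmulr_rge0 _ M'V0); lra.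
Qed.

Lemma ler_functional f g : bfun f -> bfun g -> (forall x, f x <= g x) -> L f <= L g.
Proof.
move=> bf bg fg; rewrite -subr_ge0 addrC -mulN1r -L_lin //.
by apply: functional_ge0 => [|x]; [exact: bfunMD | rewrite mulN1r addrC subr_ge0].
Qed.

Lemma functional_lower_bound {f u} (c : R) : bfun f -> bfun u ->
  (forall x, 1 - f x <= c * u x) -> 1 - c * L u <= L f.
Proof.
move=> bf bu fu.
have := @ler_functional (fun x => -1 * f x + 1) (fun x => c * u x).
rewrite L_lin ?functionalZ ?L1 //; last exact: bfun_cst.
move=> /(_ (bfunMD _ bf (bfun_cst 1)) (bfunZ c bu)) Lfu.
have : -1 * L f + 1 <= c * L u by apply: Lfu => x; rewrite mulN1r addrC.
lra.
Qed.

End ContractiveFunctional.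

Section ExtendingFunctional.
Context {R : realType} {d : measure_display} {Omega : measurableType d}.
Context {P : probability Omega R} {S : topologicalType} {n N : nat}.
Context {X : Omega -> prodS S n} {L : (prodS S N -> R) -> R}.
Hypothesis L_E : forall g : prodS S n -> R, bfun g ->
  ((L (UNn N g))%:E = \int[P]_w (g (X w))%:E)%E.
Hypothesis nN : (n <= N)%N.

Lemma extending_functional_cst1 : L (fun=> 1) = 1.
Proof.
have := L_E _ (bfun_cst 1); rewrite UNn_cst1 // integral_cst //= mul1e.
by rewrite probability_setT => -[].
Qed.

Lemma extending_functional_outside_mass {K : set S} {i0 : 'I_n} {eps : R} :
  random_element X -> closed K ->
  (P ((fun w => X w i0) @^-1` K) >= (1 - eps)%:E)%E ->
  L (outside_mass K i0) <= eps.
Proof.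
move=> hX cK PK; pose A := X @^-1` [set y | K (y i0)].
have mA : measurable A.
  apply: hX; apply: closed_borel_set.
  rewrite (_ : [set y | _] = proj i0 @^-1` K) //.
  by apply: closed_comp => // y _; exact: proj_continuous.
have := L_E _ (bfun_indic_coord K i0 cK).
rewrite (_ : \int[P]_w _ = P (~` A))%E; last first.
  by rewrite -(setIT (~` A)) -integral_indic //; exact: measurableC.
rewrite probability_setC // => LE.
have : ((L (outside_mass K i0))%:E <= (1 - (1 - eps))%:E)%E.
  by rewrite /outside_mass LE EFinB; apply: leeB.
by rewrite lee_fin; lra.
Qed.

End ExtendingFunctional.

Theorem lemma11 (R : realType) (S : topologicalType)
  (hS : hausdorff_space S) (lcS : locally_compact [set: S])
  (n N : nat) (hn : (0 < n)%N) (hnN : (n < N)%N)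
  (d : measure_display) (Omega : measurableType d) (P : probability Omega R)
  (X : Omega -> prodS S n) (hX : random_element X)
  (hexch : exchangeable P X) (htight : tight_coord P X (Ordinal hn))
  (L : (prodS S N -> R) -> R)
  (hL : extending_functional P N X L)
  (hnorm : opnorm (@bfun R S N) L = 1%E) :
  opnorm (@ccfun R S N) L = 1%E.
Proof.
have [L_lin _ L_E _] := hL; have nN := ltnW hnN.
have L1 := extending_functional_cst1 L_E nN.
have L_contr f : bfun f -> (forall x, `|f x| <= 1) -> `|L f| <= 1.
  by move=> bf f1; rewrite -lee_fin -hnorm; exact: opnorm_ub bf (supnorm_le1 f1).
apply/le_anti/andP; split.
  apply/ereal_supP => _ [f [ccf f1] <-].
  by rewrite -hnorm; exact: opnorm_ub (ccfun_bfun ccf) f1.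
apply/lee_subgt0Pr => e e0.
have N0 : 0 < N%:R :> R by rewrite ltr0n (leq_ltn_trans _ hnN).
have [K [cK PK]] := htight (e / N%:R) (divr_gt0 e0 N0).
have [f0 [cf0 f01 f0K supp_f0]] := compact_urysohn (R:=R) hS lcS cK.
have f0_ge0 y : 0 <= f0 y by have /andP[] := f01 y.
pose F (x : prodS S N) := \prod_(i < N) f0 (x i).
have ccF : ccfun F := prod_coord_ccfun cf0 supp_f0.
have F1 x : `|F x| <= 1.
  by rewrite ger0_norm ?prodr_ge0 ?prodr_ile1 // => i _; exact: f01.
have clK := compact_closed hS cK.
have Lu : N%:R * L (outside_mass K (Ordinal hn)) <= e.
  rewrite mulrC -ler_pdivlMr //.
  by have := extending_functional_outside_mass L_E hX clK PK.
have LF := functional_lower_bound L_lin L1 L_contr N%:R (ccfun_bfun ccF)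
  (bfun_outside_mass _ (Ordinal hn) nN clK)
  (fun x => one_sub_prod_le_outside_mass _ _ nN x f0_ge0 f0K).
apply: le_trans (opnorm_ub ccF (supnorm_le1 F1)).
by rewrite lee_fin; apply: le_trans (ler_norm _); lra.
Qed.
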